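(* Let $P_1=\langle v_1\rangle_{\mathbb{F}_{q^n}}$ and $P_2=\langle v_2\rangle_{\mathbb{F}_{q^n}}$ be points of $\mathrm{PG}(1,q^n)$ and let $f(x)\in\mathbb{F}_{q^n}[x]$ be a scattered polynomial. If $v_1$ and $v_2$ are eigenvectors of all matrices in $G_f$ and $G_f^\circ$ is not isomorphic to $\mathbb{F}_q$, then $P_1\notin L_f$ and $P_2\notin L_f$.
   Context: Let $q$ be a prime power and $n>1$. A $q$-polynomial $f(x)=\sum_{i=0}^{n-1}a_ix^{q^i}\in\mathbb{F}_{q^n}[x]$ is scattered if for all $y,z\in\mathbb{F}_{q^n}$, $zf(y)-yf(z)=0$ implies $y,z$ are $\mathbb{F}_q$-linearly dependent. $U_f=\{(x,f(x))\colon x\in\mathbb{F}_{q^n}\}$ and $L_f=\{\langle(x,f(x))\rangle_{\mathbb{F}_{q^n}}\colon x\in\mathbb{F}_{q^n}^*\}\subseteq\mathrm{PG}(1,q^n)$. Nonsingular $A\in\mathbb{F}_{q^n}^{2\times2}$ acts as $(x,y)\mapsto(x,y)A$ (so eigenvectors are row vectors $v$ with $vA=\lambda v$); $G_f=\{A\in\mathrm{GL}(2,q^n)\colon U_fA=U_f\}$ and $G_f^\circ=G_f\cup\{O\}$ with $O$ the zero matrix; $G_f^\circ$ is a field under matrix operations. *)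

From HB Require Import structures.
From mathcomp Require Import all_boot all_order all_algebra.
Set Implicit Arguments. Unset Strict Implicit. Unset Printing Implicit Defensive.
Import GRing.Theory.
Local Open Scope ring_scope.

Section Defs.
Variable L : finFieldType.

Definition Fq (q : nat) : {set L} := [set x : L | x ^+ q == x].

Definition qlinpoly (q n : nat) (a : 'I_n -> L) (x : L) : L :=
  \sum_(i < n) a i * x ^+ (q ^ i).

Definition Fq_dep (q : nat) (y z : L) : Prop :=
  exists a b : L, [/\ a \in Fq q, b \in Fq q, (a, b) != (0, 0) & a * y + b * z = 0].

Definition scattered (q n : nat) (a : 'I_n -> L) : Prop :=
  forall y z : L, z * qlinpoly q a y - y * qlinpoly q a z = 0 -> Fq_dep q y z.

Definition vec2 (x y : L) : 'rV[L]_2 := \row_(j < 2) (if j == ord0 then x else y).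

Definition Uf (f : L -> L) : {set 'rV[L]_2} := [set vec2 x (f x) | x : L].

Definition Gf (f : L -> L) : {set 'M[L]_2} :=
  [set A : 'M[L]_2 | (A \in unitmx) && ([set v *m A | v in Uf f] == Uf f)].

Definition Gf0 (f : L -> L) : {set 'M[L]_2} := 0 |: Gf f.

Definition ring_iso_to (S : {set 'M[L]_2}) (T : {set L}) : Prop :=
  exists phi : 'M[L]_2 -> L,
    [/\ {in S &, injective phi},
        phi @: S = T,
        {in S &, forall A B, phi (A + B) = phi A + phi B} &
        {in S &, forall A B, phi (A *m B) = phi A * phi B}].

Definition eigenvec (A : 'M[L]_2) (v : 'rV[L]_2) : Prop :=
  v != 0 /\ exists lambda : L, v *m A = lambda *: v.

(* the point <v> of PG(1,q^n) belongs to L_f *)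
Definition in_Lf (f : L -> L) (v : 'rV[L]_2) : Prop :=
  exists x : L, x != 0 /\ exists c : L, c != 0 /\ v = c *: vec2 x (f x).

End Defs.

From HB Require Import structures.
From mathcomp Require Import all_boot all_order all_algebra all_field.
From mathcomp Require Import ring.
Set Implicit Arguments. Unset Strict Implicit. Unset Printing Implicit Defensive.
Import GRing.Theory.
Local Open Scope ring_scope.

(* Suppose <v> = <(x0, f x0)> is fixed by every A in G_f, with eigenvalue lam.
   Since (x0, f x0) A = (lam x0, lam f x0) lies on U_f, scatteredness gives
   lam in F_q, and N := A - lam I maps U_f into U_f and kills (x0, f x0).
   Hence (x, f x) N = (r1 g x, r2 g x) with g x = det((x0, f x0), (x, f x)),
   and f (r1 g x) = r2 g x.  Scatteredness bounds both the kernel and (unless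
   r1 = r2 = 0) the image of the F_q-linear map g by q, so q^n <= q^2.  Thus
   for n > 2 every A in G_f is a scalar in F_q and G_f° = F_q I is isomorphic
   to F_q.  For n = 2, f = a0 x + a1 x^q and the triangular matrix
   [[xi, a0 (xi - xi^q)], [0, xi^q]] with xi outside F_q lies in G_f and
   moves <(x0, f x0)> off itself, so no point of L_f is fixed at all. *)

Lemma ord2P (j : 'I_2) : j = ord0 \/ j = ord_max.
Proof. by case: j => [[|[|//]] ?]; [left | right]; apply: val_inj. Qed.

Section Vec2.
Variable L : finFieldType.

Lemma vec2E x y (i : 'I_1) (j : 'I_2) :
  vec2 x y i j = if j == ord0 then x else y :> L.
Proof. by rewrite mxE. Qed.

Lemma vec2_inj (x y x' y' : L) : vec2 x y = vec2 x' y' -> x = x' /\ y = y'.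
Proof.
move/matrixP=> e; split; first by have := e 0 ord0; rewrite !vec2E.
by have := e 0 ord_max; rewrite !vec2E.
Qed.

Lemma scale_vec2 (c x y : L) : c *: vec2 x y = vec2 (c * x) (c * y).
Proof. by apply/matrixP=> i j; rewrite mxE !vec2E; case: ifP. Qed.

Lemma mul_vec2 (x y : L) (M : 'M[L]_2) :
  vec2 x y *m M = vec2 (x * M ord0 ord0 + y * M ord_max ord0)
                       (x * M ord0 ord_max + y * M ord_max ord_max).
Proof.
apply/matrixP=> i j; rewrite !mxE !big_ord_recl big_ord0 addr0 !vec2E /=.
have -> : lift ord0 ord0 = ord_max :> 'I_2 by apply: val_inj.
by case: (ord2P j) => ->.
Qed.

Variable f : L -> L.

Lemma Gf_graph M x : M \in Gf f -> exists y, vec2 x (f x) *m M = vec2 y (f y).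
Proof.
rewrite inE => /andP [_ /eqP UfM].
have : vec2 x (f x) *m M \in [set v *m M | v in Uf f] by do 2!apply: imset_f.
by rewrite UfM => /imsetP [y _ ->]; exists y.
Qed.

Lemma Gf_of_graph M : M \in unitmx ->
  (forall x, exists y, vec2 x (f x) *m M = vec2 y (f y)) -> M \in Gf f.
Proof.
move=> Mu graphM; rewrite inE Mu; apply/eqP/setP/subset_cardP.
  by rewrite card_imset //; apply: can_inj (mulmxK Mu).
apply/subsetP=> _ /imsetP [_ /imsetP [x _ ->] ->].
by have [y ->] := graphM x; apply: imset_f.
Qed.

Definition graph_common_eigenvector x0 :=
  forall M, M \in Gf f -> exists lam, vec2 x0 (f x0) *m M = lam *: vec2 x0 (f x0).

End Vec2.

Lemma ring_iso_to_scalar (L : finFieldType) (S : {set 'M[L]_2}) (T : {set L}) :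
  S = [set mu%:M | mu in T] -> ring_iso_to S T.
Proof.
move=> ->; exists (fun A => A ord0 ord0); split.
- by move=> _ _ /imsetP [mu _ ->] /imsetP [nu _ ->]; rewrite !mxE !mulr1n => ->.
- by rewrite -imset_comp -[RHS]imset_id; apply: eq_imset => mu; rewrite /= mxE.
- by move=> A B _ _; rewrite mxE.
- by move=> _ _ /imsetP [mu _ ->] /imsetP [nu _ ->]; rewrite -scalar_mxM !mxE.
Qed.

Lemma card_le_mul_img_ker (U V : finZmodType) (g : U -> V) :
  {morph g : x y / x - y} -> (#|U| <= #|[set g x | x : U]| * #|[set x | g x == 0%R]|)%N.
Proof.
move=> gB; pose s y := odflt 0 [pick x | g x == y].
have gs x : g (s (g x)) = g x.
  by rewrite /s; case: pickP => [x' /eqP // | /(_ x)]; rewrite eqxx.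
pose decomp x := (g x, x - s (g x)).
have decomp_inj : injective decomp by move=> x x' [e]; rewrite e => /addIr.
rewrite -cardsX -cardsT -(card_imset _ decomp_inj).
apply/subset_leq_card/subsetP=> _ /imsetP [x _ ->].
by rewrite !inE /= gB gs subrr eqxx andbT; apply: imset_f.
Qed.

Lemma card_pchar_nat (L : finFieldType) q n :
  (exists p k : nat, prime p /\ q = (p ^ k)%N) -> #|L| = (q ^ n)%N -> [pchar L].-nat q.
Proof.
move=> [p [k [p_pr ->]]] cardL; rewrite pnatX (pnatE _ p_pr).
by rewrite (card_finPcharP (n := k * n) _ p_pr) // cardL -expnM.
Qed.

Section Fq.
Variables (L : finFieldType) (q : nat).
Hypothesis q_gt1 : (1 < q)%N.

Lemma Fq0 : (0 : L) \in Fq L q.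
Proof. by rewrite inE expr0n gtn_eqF 1?ltnW. Qed.

Lemma Fq_expn c i : c \in Fq L q -> c ^+ (q ^ i) = c.
Proof.
rewrite inE => /eqP cq; elim: i => [|i IH]; first by rewrite expr1.
by rewrite expnS exprM cq IH.
Qed.

Lemma card_Fq_le : (#|Fq L q| <= q)%N.
Proof.
have size_p : size ('X^q - 'X : {poly L}) = q.+1.
  by rewrite size_polyDl ?size_polyXn // size_polyN size_polyX.
have p_neq0 : ('X^q - 'X : {poly L}) != 0 by rewrite -size_poly_eq0 size_p.
rewrite cardE -ltnS -size_p; apply: (max_poly_roots p_neq0) (enum_uniq _).
by apply/allP=> x; rewrite mem_enum inE => /eqP xq; rewrite /root !hornerE xq subrr.
Qed.

Lemma exists_notin_Fq : (q < #|L|)%N -> exists xi : L, xi \notin Fq L q.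
Proof.
move=> q_lt_L; have /subsetPn [xi _ xi_notFq] : ~~ ([set: L] \subset Fq L q).
  apply: contraTN q_lt_L => /subset_leq_card; rewrite cardsT -leqNgt => L_le.
  exact: leq_trans L_le card_Fq_le.
by exists xi.
Qed.

Hypothesis hchar : [pchar L].-nat q.

Lemma Fq_dep_multiple y0 y : y0 != 0 -> Fq_dep q y0 y ->
  exists2 c, c \in Fq L q & y = c * y0.
Proof.
move=> y0_neq0 [b [c [bFq cFq bc0 e]]].
have c_neq0 : c != 0.
  apply: contraNneq bc0 => c0; move/eqP: e; rewrite c0 mul0r addr0 mulf_eq0.
  by rewrite (negbTE y0_neq0) orbF => /eqP ->.
exists (- (b / c)).
  move: bFq cFq; rewrite !inE => /eqP bq /eqP cq.
  by rewrite exprNn_pchar // exprMn exprVn bq cq.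
have cy : c * y = - (b * y0) by rewrite -[c * y](addKr (b * y0)) e addr0.
by apply: (mulfI c_neq0); rewrite cy; field.
Qed.

Lemma card_Fq_dep_le (S : {set L}) : {in S &, forall y z, Fq_dep q y z} -> (#|S| <= q)%N.
Proof.
move=> Sdep; apply: leq_trans card_Fq_le.
case: (pickP [pred y in S | y != 0]) => [y0 /andP [y0S y0_neq0] | S0].
  apply: leq_trans (leq_imset_card (fun c => c * y0) _).
  apply/subset_leq_card/subsetP=> y yS.
  by have [c cFq ->] := Fq_dep_multiple y0_neq0 (Sdep _ _ y0S yS); apply: imset_f.
apply: (@leq_trans #|[set 0 : L]|); last by rewrite subset_leq_card // sub1set Fq0.
apply/subset_leq_card/subsetP => y yS.
by move: (S0 y); rewrite /= yS => /negbFE /eqP ->; rewrite inE.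
Qed.

Variables (n : nat) (a : 'I_n -> L).
Local Notation f := (qlinpoly q a).

Lemma qlinpolyB x y : f (x - y) = f x - f y.
Proof.
rewrite /qlinpoly -sumrB; apply: eq_bigr => i _.
have qi_char : [pchar L].-nat (q ^ i)%N by rewrite pnatX hchar.
by rewrite exprDn_pchar // exprNn_pchar // mulrBr.
Qed.

Lemma qlinpoly0 : f 0 = 0.
Proof. by rewrite -{1}(subrr 0) qlinpolyB subrr. Qed.

Lemma qlinpolyMFq c x : c \in Fq L q -> f (c * x) = c * f x.
Proof.
move=> cFq; rewrite /qlinpoly mulr_sumr; apply: eq_bigr => i _.
by rewrite exprMn Fq_expn // mulrCA.
Qed.

Lemma scalar_Fq_in_Gf0 c : c \in Fq L q -> c%:M \in Gf0 f.
Proof.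
move=> cFq; rewrite in_setU1; have [-> | c_neq0] := eqVneq c 0.
  by rewrite raddf0 eqxx.
apply/orP; right; apply: Gf_of_graph.
  by rewrite unitmxE det_scalar unitfE expf_neq0.
by move=> x; exists (c * x); rewrite mul_mx_scalar scale_vec2 qlinpolyMFq.
Qed.

Hypothesis hscat : scattered q a.

Lemma card_slope_le (t : L) : (#|[set x | f x == (t * x)%R]| <= q)%N.
Proof.
apply: card_Fq_dep_le => y z; rewrite !inE => /eqP fy /eqP fz.
by apply: hscat; rewrite fy fz; ring.
Qed.

Lemma Gf_eigenvalue_Fq M x0 lam : x0 != 0 -> M \in Gf f ->
  vec2 x0 (f x0) *m M = lam *: vec2 x0 (f x0) -> lam \in Fq L q.
Proof.
move=> x0_neq0 MGf eig; have [y] := Gf_graph x0 MGf.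
rewrite eig scale_vec2 => /vec2_inj [y_eq fy_eq]; subst y.
have : Fq_dep q x0 (lam * x0) by apply: hscat; rewrite -fy_eq; ring.
by case/(Fq_dep_multiple x0_neq0) => c cFq /(mulIf x0_neq0) ->.
Qed.

Definition graph_det x0 x := x * f x0 - x0 * f x.

Lemma graph_detB x0 : {morph graph_det x0 : x y / x - y}.
Proof. by move=> x y; rewrite /graph_det qlinpolyB; ring. Qed.

Hypothesis cardL : #|L| = (q ^ n)%N.
Hypothesis n_gt2 : (2 < n)%N.

Lemma graph_det_twist_eq0 x0 r1 r2 : x0 != 0 ->
  (forall x, f (r1 * graph_det x0 x) = r2 * graph_det x0 x) -> r1 = 0 /\ r2 = 0.
Proof.
move=> x0_neq0 twist; suff /andP [/eqP r1_0 /eqP r2_0] : (r1 == 0) && (r2 == 0) by [].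
apply/contraT; rewrite negb_and => r_neq0.
have ker_le : (#|[set x | graph_det x0 x == 0%R]| <= q)%N.
  apply/(leq_trans _ (card_slope_le (f x0 / x0)))/subset_leq_card/subsetP => x.
  by rewrite !inE subr_eq0 => /eqP e; apply/eqP/(mulfI x0_neq0); rewrite -e; field.
have img_le : (#|[set graph_det x0 x | x : L]| <= q)%N.
  have [r1_0 | r1_neq0] := eqVneq r1 0.
    have g0 x : graph_det x0 x = 0.
      move: r_neq0 (twist x); rewrite r1_0 eqxx mul0r qlinpoly0 => /= r2_neq0.
      move/esym/eqP.
      by rewrite mulf_eq0 (negbTE r2_neq0) => /eqP.
    apply: (@leq_trans #|[set 0 : L]|); last by rewrite cards1 ltnW.
    by apply/subset_leq_card/subsetP => _ /imsetP [x _ ->]; rewrite g0 inE.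
  apply/(leq_trans _ (card_slope_le (r2 / r1))).
  apply/(leq_trans _ (leq_imset_card (fun z => z / r1) _)).
  apply/subset_leq_card/subsetP => _ /imsetP [x _ ->]; apply/imsetP.
  exists (r1 * graph_det x0 x); last by field.
  by rewrite inE twist; apply/eqP; field.
have := leq_trans (card_le_mul_img_ker (graph_detB x0)) (leq_mul img_le ker_le).
by rewrite cardL mulnn leq_exp2l // leqNgt n_gt2.
Qed.

Lemma Gf_eigen_scalar M x0 lam : x0 != 0 -> M \in Gf f ->
  vec2 x0 (f x0) *m M = lam *: vec2 x0 (f x0) -> M = lam%:M.
Proof.
move=> x0_neq0 MGf eig; have lamFq := Gf_eigenvalue_Fq x0_neq0 MGf eig.
move: eig; rewrite mul_vec2 scale_vec2 => /vec2_inj [eig1 eig2].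
set al := M ord0 ord0 in eig1 *; set be := M ord0 ord_max in eig2 *.
set ga := M ord_max ord0 in eig1 *; set de := M ord_max ord_max in eig2 *.
have al_eq : al = (lam * x0 - f x0 * ga) / x0 by rewrite -eig1; field.
have be_eq : be = (lam - de) * f x0 / x0 by rewrite mulrBl -eig2; field.
have twist x : f (- ga / x0 * graph_det x0 x) = (lam - de) / x0 * graph_det x0 x.
  have [y] := Gf_graph x MGf; rewrite mul_vec2 => /vec2_inj [y_eq fy_eq].
  rewrite -/al -/be -/ga -/de in y_eq fy_eq.
  have -> : - ga / x0 * graph_det x0 x = y - lam * x.
    by rewrite -y_eq al_eq /graph_det; field.
  by rewrite qlinpolyB qlinpolyMFq // -fy_eq be_eq /graph_det; field.
have [ga_0 de_lam] : ga = 0 /\ de = lam.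
  have [/eqP r1_0 /eqP r2_0] := graph_det_twist_eq0 x0_neq0 twist.
  move: r1_0 r2_0; rewrite !mulf_eq0 invr_eq0 oppr_eq0 subr_eq0 (negbTE x0_neq0) !orbF.
  by move=> /eqP -> /eqP ->.
apply/matrixP => i j; rewrite !mxE.
case: (ord2P i) => ->; case: (ord2P j) => -> /=.
- by rewrite -/al al_eq ga_0 mulr0 subr0 mulr1n; field.
- by rewrite -/be be_eq de_lam subrr !mul0r.
- by rewrite -/ga ga_0.
- by rewrite -/de de_lam mulr1n.
Qed.

Lemma Gf0_eq_scalar_Fq_gt2 x0 : x0 != 0 ->
  graph_common_eigenvector f x0 ->
  Gf0 f = [set mu%:M | mu in Fq L q].
Proof.
move=> x0_neq0 eigM; apply/setP => M; apply/idP/imsetP => [|[mu muFq ->]].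
  rewrite in_setU1 => /orP [/eqP -> | MGf].
    by exists 0; [exact: Fq0 | rewrite raddf0].
  have [lam eig] := eigM M MGf.
  exists lam; [exact: Gf_eigenvalue_Fq eig | exact: Gf_eigen_scalar eig].
exact: scalar_Fq_in_Gf0.
Qed.

End Fq.

Section Degree2.
Variables (L : finFieldType) (q : nat) (a : 'I_2 -> L).
Hypotheses (q_gt1 : (1 < q)%N) (hchar : [pchar L].-nat q).
Local Notation f := (qlinpoly q a).

Lemma qlinpoly2 x : f x = a ord0 * x + a ord_max * x ^+ q.
Proof.
rewrite /qlinpoly !big_ord_recl big_ord0 /= expn0 expn1 expr1 addr0.
by have -> : lift ord0 ord0 = ord_max :> 'I_2 by apply: val_inj.
Qed.

Definition Gf2_triangular (xi : L) : 'M[L]_2 :=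
  \matrix_(i, j) if i == ord0 then (if j == ord0 then xi else a ord0 * (xi - xi ^+ q))
                 else (if j == ord0 then 0 else xi ^+ q).

Lemma Gf2_triangular_in_Gf xi : xi != 0 -> Gf2_triangular xi \in Gf f.
Proof.
move=> xi_neq0; apply: Gf_of_graph => [|x].
  rewrite unitmxE -det_tr det_trig.
    by rewrite !big_ord_recl big_ord0 !mxE /= mulr1 unitfE mulf_neq0 // expf_neq0.
  apply/is_trig_mxP => i j; case: (ord2P i) => ->; case: (ord2P j) => -> //.
  by rewrite !mxE.
exists (xi * x); rewrite mul_vec2 !mxE /= !qlinpoly2 exprMn; congr vec2; ring.
Qed.

Hypothesis hscat : scattered q a.
Hypothesis cardL : #|L| = (q ^ 2)%N.

Lemma no_Gf2_invariant_graph_point x0 : x0 != 0 ->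
  ~ graph_common_eigenvector f x0.
Proof.
move=> x0_neq0 eigM.
have [xi xi_notFq] : exists xi : L, xi \notin Fq L q.
  by apply: exists_notin_Fq => //; rewrite cardL -{1}(expn1 q) ltn_exp2l.
have xi_neq0 : xi != 0 by apply: contraNneq xi_notFq => ->; exact: Fq0.
have MGf := Gf2_triangular_in_Gf xi_neq0.
have [lam eig] := eigM _ MGf.
have := Gf_eigenvalue_Fq hchar hscat x0_neq0 MGf eig.
move: eig; rewrite mul_vec2 scale_vec2 !mxE /= => /vec2_inj [eig1 _].
suff -> : lam = xi by apply/negP.
by apply: (mulIf x0_neq0); rewrite -eig1 mulr0 addr0 mulrC.
Qed.

End Degree2.

Lemma Gf0_eq_scalar_Fq (L : finFieldType) q n (a : 'I_n -> L) x0 :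
  (1 < q)%N -> [pchar L].-nat q -> (1 < n)%N -> #|L| = (q ^ n)%N -> scattered q a ->
  x0 != 0 -> graph_common_eigenvector (qlinpoly q a) x0 ->
  Gf0 (qlinpoly q a) = [set mu%:M | mu in Fq L q].
Proof.
move=> q_gt1 hchar n_gt1 cardL hscat x0_neq0 eigM.
have [n_gt2 | n_lt2 | n2] := ltngtP 2 n; first exact: Gf0_eq_scalar_Fq_gt2 eigM.
  by move: n_lt2; rewrite ltnNge n_gt1.
by subst n; case: (no_Gf2_invariant_graph_point q_gt1 hchar hscat cardL x0_neq0 eigM).
Qed.

Unset Implicit Arguments. Set Strict Implicit.

Theorem proposition3p15 (L : finFieldType) (q n : nat)
  (hq : (1 < q)%N) (hqpp : exists p k : nat, prime p /\ q = (p ^ k)%N)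
  (hn : (1 < n)%N) (hcard : #|L| = (q ^ n)%N)
  (a : 'I_n -> L) (hscat : scattered q a)
  (v1 v2 : 'rV[L]_2) (hv1 : v1 != 0) (hv2 : v2 != 0)
  (heig1 : forall A : 'M[L]_2, A \in Gf (qlinpoly q a) -> eigenvec A v1)
  (heig2 : forall A : 'M[L]_2, A \in Gf (qlinpoly q a) -> eigenvec A v2)
  (hnoiso : ~ ring_iso_to (Gf0 (qlinpoly q a)) (Fq L q)) :
  ~ in_Lf (qlinpoly q a) v1 /\ ~ in_Lf (qlinpoly q a) v2.
Proof.
have hchar := card_pchar_nat hqpp hcard.
have notin_Lf v : (forall A, A \in Gf (qlinpoly q a) -> eigenvec A v) ->
    ~ in_Lf (qlinpoly q a) v.
  move=> eigv [x0 [x0_neq0 [c [c_neq0 v_eq]]]]; subst v; apply: hnoiso.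
  apply/ring_iso_to_scalar/(Gf0_eq_scalar_Fq hq hchar hn hcard hscat x0_neq0).
  move=> M MGf; have [_ [lam eig]] := eigv M MGf; exists lam.
  by apply: (scalerI c_neq0); rewrite scalemxAl eig !scalerA mulrC.
by split; apply: notin_Lf.
Qed.
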